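(* Consider the nonlinear program described in the context and let $\alpha>0$. If MFCQ holds at $x^*\in\mathcal{C}$, then (i) $\mathcal{G}_\alpha(x^* )=0$ if and only if $x^*\in X_{KKT}$; and (ii) if $x^*\in X_{KKT}$, then $\Lambda_\alpha(x^* )$ equals the set of Lagrange multipliers of the program at $x^*$.
   Context: Let $f:\mathbb{R}^n\to\mathbb{R}$, $g:\mathbb{R}^n\to\mathbb{R}^m$, $h:\mathbb{R}^n\to\mathbb{R}^k$ be continuously differentiable; consider minimize $f(x)$ subject to $g(x)\le0$, $h(x)=0$ with feasible set $\mathcal{C}$; $I_0(x)=\{i:g_i(x)=0\}$. MFCQ at $x$: $\{\nabla h_j(x)\}_{j=1}^k$ linearly independent and some $\xi$ has $\nabla h_j(x)^\top\xi=0$ for all $j$ and $\nabla g_i(x)^\top\xi<0$ for $i\in I_0(x)$. $(u^*,v^* )\in\mathbb{R}^m\times\mathbb{R}^k$ are Lagrange multipliers at $x^*$ if $\nabla f(x^* )+\frac{\partial g}{\partial x}(x^* )^\top u^*+\frac{\partial h}{\partial x}(x^* )^\top v^*=0$, $g(x^* )\le0$, $h(x^* )=0$, $u^*\ge0$, $(u^* )^\top g(x^* )=0$; $X_{KKT}$ is the set of points admitting Lagrange multipliers. With $G=\frac{\partial g}{\partial x}(x)$, $H=\frac{\partial h}{\partial x}(x)$: $\mathcal{G}_\alpha(x)$ is the unique minimizer over $\xi$ of $\frac12\|\xi+\nabla f(x)\|^2$ subject to $G\xi\le-\alpha g(x)$, $H\xi=-\alpha h(x)$; $\Lambda_\alpha(x)$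 is the set of $(u,v)\in\mathbb{R}^m_{\ge0}\times\mathbb{R}^k$ for which some $\xi$ satisfies $\xi+\nabla f(x)+G^\top u+H^\top v=0$, $G\xi+\alpha g(x)\le0$, $H\xi+\alpha h(x)=0$, $u\ge0$, $u^\top(G\xi+\alpha g(x))=0$. *)

From HB Require Import structures.
From mathcomp Require Import all_boot all_order all_algebra.
From mathcomp Require Import all_classical all_reals all_analysis.
Set Implicit Arguments. Unset Strict Implicit. Unset Printing Implicit Defensive.
Import Order.TTheory GRing.Theory Num.Theory.
Import numFieldNormedType.Exports.
Local Open Scope classical_set_scope.
Local Open Scope ring_scope.

Section NLP.
Variables (R : realType) (n m k : nat).

Definition grad (f : 'rV[R]_n -> R) (x : 'rV[R]_n) : 'rV[R]_n :=
  \row_(j < n) 'D_(delta_mx 0 j) f x.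

Definition C1 (f : 'rV[R]_n -> R) : Prop :=
  (forall x, differentiable f x) /\
  (forall j : 'I_n, continuous (fun x => 'D_(delta_mx 0 j) f x)).

Definition dotv (p : nat) (a b : 'rV[R]_p) : R := \sum_(j < p) a 0 j * b 0 j.
Definition sqnorm (p : nat) (a : 'rV[R]_p) : R := \sum_(j < p) a 0 j ^+ 2.

Variables (f : 'rV[R]_n -> R) (g : 'I_m -> 'rV[R]_n -> R)
          (h : 'I_k -> 'rV[R]_n -> R).

Definition gvec (x : 'rV[R]_n) : 'rV[R]_m := \row_(i < m) g i x.
Definition hvec (x : 'rV[R]_n) : 'rV[R]_k := \row_(j < k) h j x.

Definition Gjac (x : 'rV[R]_n) : 'M[R]_(m, n) := \matrix_(i < m, l < n) grad (g i) x 0 l.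
Definition Hjac (x : 'rV[R]_n) : 'M[R]_(k, n) := \matrix_(j < k, l < n) grad (h j) x 0 l.

Definition feasible (x : 'rV[R]_n) : Prop :=
  (forall i, g i x <= 0) /\ (forall j, h j x = 0).

Definition active (x : 'rV[R]_n) : set 'I_m := [set i | g i x = 0].

Definition MFCQ (x : 'rV[R]_n) : Prop :=
  row_free (Hjac x) /\
  exists xi : 'rV[R]_n,
    (forall j, dotv (grad (h j) x) xi = 0) /\
    (forall i, i \in active x -> dotv (grad (g i) x) xi < 0).

(* (u, v) are Lagrange multipliers at x  (G^T u is written u *m G in row form) *)
Definition lagrange_mult (x : 'rV[R]_n) (uv : 'rV[R]_m * 'rV[R]_k) : Prop :=
  [/\ grad f x + uv.1 *m Gjac x + uv.2 *m Hjac x = 0,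
      (forall i, g i x <= 0),
      (forall j, h j x = 0),
      (forall i, 0 <= uv.1 0 i) &
      dotv uv.1 (gvec x) = 0].

Definition multipliers (x : 'rV[R]_n) : set ('rV[R]_m * 'rV[R]_k) :=
  [set uv | lagrange_mult x uv].

Definition X_KKT : set 'rV[R]_n := [set x | exists uv, lagrange_mult x uv].

Definition qp_feasible (alpha : R) (x xi : 'rV[R]_n) : Prop :=
  (forall i, dotv (grad (g i) x) xi <= - alpha * g i x) /\
  (forall j, dotv (grad (h j) x) xi = - alpha * h j x).

Definition qp_minimizer (alpha : R) (x xi : 'rV[R]_n) : Prop :=
  qp_feasible alpha x xi /\
  forall z, qp_feasible alpha x z ->
    sqnorm (xi + grad f x) / 2 <= sqnorm (z + grad f x) / 2.

(* G_alpha(x): the (unique) minimizer of the QP (chosen by classical choice;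
   it exists and is unique whenever the QP is feasible, e.g. for x in C) *)
Definition Galpha (alpha : R) (x : 'rV[R]_n) : 'rV[R]_n :=
  xget 0 [set xi | qp_minimizer alpha x xi].

Definition Lambda (alpha : R) (x : 'rV[R]_n) : set ('rV[R]_m * 'rV[R]_k) :=
  [set uv : 'rV[R]_m * 'rV[R]_k | (forall i, 0 <= uv.1 0 i) /\
    exists xi : 'rV[R]_n,
      [/\ xi + grad f x + uv.1 *m Gjac x + uv.2 *m Hjac x = 0,
          (forall i, dotv (grad (g i) x) xi + alpha * g i x <= 0),
          (forall j, dotv (grad (h j) x) xi + alpha * h j x = 0),
          (forall i, 0 <= uv.1 0 i) &
          dotv uv.1 (\row_(i < m) (dotv (grad (g i) x) xi + alpha * g i x)) = 0]].

End NLP.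

(* Write c for the gradient of f at xstar and P for the polyhedron
   { xi | G xi <= - alpha g(xstar), H xi = - alpha h(xstar) }, so that
   G_alpha(xstar) is the projection of - c onto P.  Since alpha > 0, a pair
   (u, v) is a Lagrange multiplier at xstar exactly when it is a KKT multiplier
   of this projection problem at xi = 0.  A KKT point of a projection onto a
   polyhedron is its unique minimizer; this gives both G_alpha(xstar) = 0 and
   Lambda_alpha(xstar) = multipliers when xstar is a KKT point.  Conversely, if
   0 is the projection, small steps along any direction d of the linearized
   cone stay in P, so c . d >= 0 on that cone, and Farkas' lemma writes - c as
   a conic combination of the active inequality gradients and of plus or minus
   the equality gradients, i.e. yields multipliers.  The constraints of the projection problem are linear, so
   neither MFCQ nor the differentiability of the data is needed; the minimizer
   exists by compactness, so G_alpha(xstar) is never the junk value of the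
   choice operator. *)

From HB Require Import structures.
From mathcomp Require Import all_boot all_order all_algebra.
From mathcomp Require Import all_classical all_reals all_analysis.
From mathcomp.algebra_tactics Require Import ring lra.
Set Implicit Arguments. Unset Strict Implicit. Unset Printing Implicit Defensive.
Import Order.TTheory GRing.Theory Num.Theory.
Import numFieldNormedType.Exports.
Local Open Scope classical_set_scope.
Local Open Scope ring_scope.

Section Dotv.
Variables (R : realType) (n : nat).
Implicit Types (a b c z : 'rV[R]_n) (r t : R).

Lemma dotvC a b : dotv a b = dotv b a.
Proof. by apply: eq_bigr => j _; rewrite mulrC. Qed.

Lemma dotvDl a b c : dotv (a + b) c = dotv a c + dotv b c.
Proof. by rewrite /dotv -big_split; apply: eq_bigr => j _; rewrite !mxE mulrDl. Qed.

Lemma dotvDr a b c : dotv a (b + c) = dotv a b + dotv a c.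
Proof. by rewrite dotvC dotvDl !(dotvC a). Qed.

Lemma dotvZl t a b : dotv (t *: a) b = t * dotv a b.
Proof. by rewrite /dotv mulr_sumr; apply: eq_bigr => j _; rewrite !mxE mulrA. Qed.

Lemma dotvZr t a b : dotv a (t *: b) = t * dotv a b.
Proof. by rewrite dotvC dotvZl dotvC. Qed.

Lemma dotvNl a b : dotv (- a) b = - dotv a b.
Proof. by rewrite -scaleN1r dotvZl mulN1r. Qed.

Lemma dotvNr a b : dotv a (- b) = - dotv a b.
Proof. by rewrite dotvC dotvNl dotvC. Qed.

Lemma dotvBl a b c : dotv (a - b) c = dotv a c - dotv b c.
Proof. by rewrite dotvDl dotvNl. Qed.

Lemma dotvBr a b c : dotv a (b - c) = dotv a b - dotv a c.
Proof. by rewrite dotvDr dotvNr. Qed.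

Lemma dotv0r a : dotv a 0 = 0.
Proof. by rewrite -(scale0r 0) dotvZr mul0r. Qed.

Lemma dotv_suml (I : finType) (F : I -> 'rV[R]_n) b :
  dotv (\sum_i F i) b = \sum_i dotv (F i) b.
Proof.
rewrite /dotv exchange_big /=; apply: eq_bigr => j _.
by rewrite summxE mulr_suml.
Qed.

Lemma dotv_sumr (I : finType) (F : I -> 'rV[R]_n) a :
  dotv a (\sum_i F i) = \sum_i dotv a (F i).
Proof. by rewrite dotvC dotv_suml; apply: eq_bigr => i _; rewrite dotvC. Qed.

Lemma sqnormE a : sqnorm a = dotv a a.
Proof. by apply: eq_bigr => j _; rewrite expr2. Qed.

Lemma sqnorm_ge0 a : 0 <= sqnorm a.
Proof. by apply: sumr_ge0 => j _; rewrite sqr_ge0. Qed.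

Lemma sqnorm_le0 a : (sqnorm a <= 0) = (a == 0).
Proof.
apply/idP/eqP => [|->]; last by rewrite /sqnorm big1 // => j _; rewrite mxE expr0n.
rewrite le_eqVlt ltNge sqnorm_ge0 orbF /sqnorm psumr_eq0 => [/allP a0|j _];
  last exact: sqr_ge0.
by apply/rowP => j; apply/eqP; rewrite mxE -sqrf_eq0; exact: a0 j (mem_index_enum _).
Qed.

Lemma sqnormD a b : sqnorm (a + b) = sqnorm a + 2 * dotv a b + sqnorm b.
Proof. by rewrite !sqnormE dotvDl !dotvDr (dotvC b a); ring. Qed.

Lemma sqnormZ t a : sqnorm (t *: a) = t ^+ 2 * sqnorm a.
Proof. by rewrite !sqnormE dotvZl dotvZr mulrA -expr2. Qed.

Lemma coord_sqr_le_sqnorm a j : a 0 j ^+ 2 <= sqnorm a.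
Proof. by rewrite /sqnorm (bigD1 j) //= lerDl; apply: sumr_ge0 => i _; exact: sqr_ge0. Qed.

Lemma dotv_continuous a : continuous (dotv a).
Proof.
apply: continuous_big => [|j _ z]; first exact: add_continuous.
by apply: continuousM; [exact: cst_continuous | exact: coord_continuous].
Qed.

Lemma sqnormDr_continuous c : continuous (fun z : 'rV[R]_n => sqnorm (z + c)).
Proof.
rewrite (_ : (fun z => _) =
             fun z : 'rV[R]_n => \sum_j (z 0 j + c 0 j) * (z 0 j + c 0 j)); last first.
  by apply: funext => z; apply: eq_bigr => j _; rewrite mxE expr2.
apply: continuous_big => [|j _ z]; first exact: add_continuous.
have cj : {for z, continuous (fun z : 'rV[R]_n => z 0 j + c 0 j)}.
  by apply: continuousD; [exact: coord_continuous | exact: cst_continuous].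
exact: (continuousM cj cj).
Qed.

Lemma closed_polyhedron (p q : nat) (a : 'I_p -> 'rV[R]_n) (r : 'I_p -> R)
    (b : 'I_q -> 'rV[R]_n) (s : 'I_q -> R) :
  closed [set z | (forall i, dotv (a i) z <= r i) /\ (forall j, dotv (b j) z = s j)].
Proof.
have -> : [set z | (forall i, dotv (a i) z <= r i) /\ (forall j, dotv (b j) z = s j)] =
    \bigcap_i (dotv (a i) @^-1` [set y | y <= r i]) `&`
    \bigcap_j (dotv (b j) @^-1` [set y | y = s j]).
  by apply/seteqP; split => z /= [Ha Hb]; split => i *; by [apply: Ha | apply: Hb].
apply: closedI; apply: closed_bigI => i _; apply: preimage_closed;
  by [move=> z _; exact: dotv_continuous | exact: closed_le | exact: closed_eq].
Qed.

Lemma compact_sqnorm_le c r : compact [set z | sqnorm (z + c) <= r].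
Proof.
apply: bounded_closed_compact.
  exists (2 + `|r| + sqnorm c); split; first exact: num_real.
  move=> M /ltW M_ge z /= zc; rewrite /Num.norm /= mx_normrE.
  apply: bigmax_le => [|[i j] _ /=].
    by have := sqnorm_ge0 c; have := normr_ge0 r; lra.
  have norm_le_sqr (w : R) : `|w| <= 1 + w ^+ 2.
    by rewrite -(real_normK (num_real w)); have := normr_ge0 w; nra.
  rewrite (ord1 i) (_ : z 0 j = (z + c) 0 j - c 0 j); last by rewrite mxE addrK.
  apply: le_trans (ler_normB _ _) _.
  have := norm_le_sqr ((z + c) 0 j); have := norm_le_sqr (c 0 j).
  have := coord_sqr_le_sqnorm (z + c) j; have := coord_sqr_le_sqnorm c j.
  have := ler_norm r; lra.
rewrite (_ : [set z | _ <= r] = (fun z => sqnorm (z + c)) @^-1` [set y | y <= r]) //.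
apply: preimage_closed => [z _|]; last exact: closed_le.
exact: sqnormDr_continuous.
Qed.

End Dotv.

Lemma small_affine_ge0 (F : realFieldType) (a b t : F) :
  0 < t -> (forall s, 0 < s <= t -> 0 <= s * a + b) -> 0 <= b.
Proof.
move=> t_gt0 Hab; rewrite leNgt; apply/negP => b_lt0.
have na_ge0 := normr_ge0 a.
pose s := Order.min t (- b / (1 + `|a|)).
have s_gt0 : 0 < s by rewrite lt_min t_gt0 divr_gt0 //; lra.
have s_le : s * (1 + `|a|) <= - b by rewrite -ler_pdivlMr ?ge_min ?lexx ?orbT //; lra.
have := Hab s; rewrite s_gt0 ge_min lexx /= => /(_ isT).
have := ler_wpM2l (ltW s_gt0) (ler_norm a); nra.
Qed.

Section Farkas.
Variables (R : realType) (n : nat).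

Definition in_cone (I : finType) (a : I -> 'rV[R]_n) (b : 'rV[R]_n) :=
  exists2 y : I -> R, (forall i, 0 <= y i) & b = \sum_i y i *: a i.

Lemma in_cone_recl p (a : 'I_p.+1 -> 'rV[R]_n) b t :
  0 <= t -> in_cone (a \o lift ord0) (b - t *: a ord0) -> in_cone a b.
Proof.
move=> t_ge0 [y y_ge0 Eb].
exists (fun i => if unlift ord0 i is Some j then y j else t).
  by move=> i; case: unlift.
rewrite big_ord_recl unlift_none; under eq_bigr do rewrite liftK.
by rewrite -Eb addrC subrK.
Qed.

Lemma farkas_ord p (a : 'I_p -> 'rV[R]_n) b :
  (forall x, (forall i, 0 <= dotv (a i) x) -> 0 <= dotv b x) -> in_cone a b.
Proof.
elim: p a b => [|p IH] a b Hab.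
  exists (fun=> 0) => //; rewrite big_ord0; apply/eqP.
  rewrite -sqnorm_le0 sqnormE -oppr_ge0 -dotvNr.
  by apply: Hab => i; have := ltn_ord i; rewrite ltn0.
set a0 := a ord0; set a' := a \o lift ord0.
have Ha x : 0 <= dotv a0 x -> (forall i, 0 <= dotv (a' i) x) -> forall i, 0 <= dotv (a i) x.
  by move=> h0 h' i; case: (unliftP ord0 i) => [j ->|->]; [exact: h' | exact: h0].
have [Hb'|] := pselect (forall x, (forall i, 0 <= dotv (a' i) x) -> 0 <= dotv b x).
  by apply: (in_cone_recl (lexx 0)); rewrite scale0r subr0; exact: IH.
move=> /existsNP[x0 /not_implyP[Hx0 /negP]]; rewrite -ltNge => bx0.
set D := dotv a0 x0.
have D_lt0 : D < 0.
  by rewrite ltNge; apply/negP => /Ha/(_ Hx0)/Hab; rewrite leNgt bx0.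
(* Eliminate [a0]: [pi] projects along [a0] onto the hyperplane orthogonal
   to [x0], where the induction hypothesis applies to the projected data. *)
pose pi v := v - (dotv v x0 / D) *: a0.
have dotv_pi v x : dotv (pi v) x = dotv v (x - (dotv a0 x / D) *: x0).
  by rewrite dotvBl dotvZl dotvBr dotvZr; ring.
have [y y_ge0 Epi] : in_cone (pi \o a') (pi b).
  apply: IH => x Hx; rewrite dotv_pi; apply: Hab; apply: Ha => [|i].
    by rewrite dotvBr dotvZr -/D divfK ?subrr // lt_eqF.
  by rewrite -dotv_pi; exact: Hx.
set s := \sum_i y i *: a' i.
have pi_s : \sum_i y i *: pi (a' i) = pi s.
  rewrite /pi /s; under eq_bigr do rewrite scalerBr scalerA.
  rewrite sumrB -scaler_suml dotv_suml mulr_suml; congr (_ - _ *: _).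
  by apply: eq_bigr => i _; rewrite dotvZl mulrA.
have Ebs : b - (dotv (b - s) x0 / D) *: a0 = s.
  move: Epi; rewrite /= pi_s /pi dotvBl mulrBl scalerBl => /eqP.
  by rewrite subr_eq => /eqP {1}->; rewrite opprB addrACA subrK subrr addr0.
apply: (in_cone_recl (t := dotv (b - s) x0 / D)); last by rewrite Ebs; exists y.
rewrite ler_ndivlMr // mul0r dotvBl subr_le0; apply: ltW; apply: lt_le_trans bx0 _.
by rewrite dotv_suml; apply: sumr_ge0 => i _; rewrite dotvZl mulr_ge0.
Qed.

Lemma farkas (I : finType) (a : I -> 'rV[R]_n) b :
  (forall x, (forall i, 0 <= dotv (a i) x) -> 0 <= dotv b x) -> in_cone a b.
Proof.
move=> Hab; have [y y_ge0 ->] : in_cone (fun j : 'I_#|I| => a (enum_val j)) b.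
  by apply: farkas_ord => x Hx; apply: Hab => i; rewrite -(enum_rankK i); exact: Hx.
exists (y \o enum_rank) => [i|]; first exact: y_ge0.
rewrite [RHS](reindex (fun j : 'I_#|I| => enum_val j)) /=;
  last exact: onW_bij (enum_val_bij I).
by apply: eq_bigr => j _; rewrite enum_valK.
Qed.

End Farkas.

Section ProjectionQP.
Variables (R : realType) (n m k : nat) (f : 'rV[R]_n -> R)
  (g : 'I_m -> 'rV[R]_n -> R) (h : 'I_k -> 'rV[R]_n -> R) (alpha : R) (x : 'rV[R]_n).

Local Notation c := (grad f x).
Local Notation qp_feasible := (qp_feasible g h alpha x).
Local Notation qp_minimizer := (qp_minimizer f g h alpha x).

Lemma mulmx_Gjac (u : 'rV[R]_m) : u *m Gjac g x = \sum_i u 0 i *: grad (g i) x.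
Proof. by apply/rowP => l; rewrite !mxE summxE; apply: eq_bigr => i _; rewrite !mxE. Qed.

Lemma mulmx_Hjac (v : 'rV[R]_k) : v *m Hjac h x = \sum_j v 0 j *: grad (h j) x.
Proof. by apply/rowP => l; rewrite !mxE summxE; apply: eq_bigr => j _; rewrite !mxE. Qed.

Definition qp_kkt (xi : 'rV[R]_n) (uv : 'rV[R]_m * 'rV[R]_k) : Prop :=
  [/\ forall i, 0 <= uv.1 0 i,
      xi + c + uv.1 *m Gjac g x + uv.2 *m Hjac h x = 0,
      qp_feasible xi &
      dotv uv.1 (\row_i (dotv (grad (g i) x) xi + alpha * g i x)) = 0].

Lemma Lambda_qp_kkt uv : Lambda f g h alpha x uv <-> exists xi, qp_kkt xi uv.
Proof.
split => [[u_ge0 [xi [E Gxi Hxi _ cs]]] | [xi [u_ge0 E [Gxi Hxi] cs]]].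
  by exists xi; split=> //; split => [i|j]; [have := Gxi i | have := Hxi j]; lra.
by split=> //; exists xi; split=> // [i|j]; [have := Gxi i | have := Hxi j]; lra.
Qed.

Lemma qp_feasible0 : feasible g h x -> 0 <= alpha -> qp_feasible 0.
Proof.
move=> [gx hx] alpha_ge0; split => [i|j]; rewrite dotv0r; last by rewrite hx mulr0.
by rewrite mulNr oppr_ge0 mulr_ge0_le0.
Qed.

Lemma lagrange_mult_qp_kkt0 uv :
  feasible g h x -> 0 < alpha -> lagrange_mult f g h x uv <-> qp_kkt 0 uv.
Proof.
move=> Fx alpha_gt0.
have cs0 : dotv uv.1 (\row_i (dotv (grad (g i) x) 0 + alpha * g i x)) =
    alpha * dotv uv.1 (gvec g x).
  by rewrite -dotvZr; congr dotv; apply/rowP => i; rewrite !mxE dotv0r add0r.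
split => [[E _ _ u_ge0 cs] | [u_ge0 E _ cs]].
  split=> //; first by rewrite add0r.
    exact: qp_feasible0 (ltW alpha_gt0).
  by rewrite cs0 cs mulr0.
have [gx hx] := Fx; split=> //; first by rewrite -E add0r.
by move: cs; rewrite cs0 => /eqP; rewrite mulf_eq0 gt_eqF //= => /eqP.
Qed.

Lemma qp_kkt_dotv_ge0 xi uv z :
  qp_kkt xi uv -> qp_feasible z -> 0 <= dotv (z - xi) (xi + c).
Proof.
case: uv => u v [/= u_ge0 E [_ Hxi] cs] [Gz Hz].
(* By stationarity xi + c = - (G^T u + H^T v); by complementarity
   u . G (z - xi) = u . (G z + alpha g) <= 0. *)
have -> : xi + c = - (u *m Gjac g x + v *m Hjac h x).
  by apply/eqP; rewrite -addr_eq0 addrA E.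
rewrite dotvNr oppr_ge0 dotvDr mulmx_Gjac mulmx_Hjac !dotv_sumr.
rewrite [X in _ + X]big1 ?addr0 => [|j _]; last first.
  by rewrite dotvZr dotvC dotvBr Hz Hxi subrr mulr0.
have cs' : \sum_i u 0 i * (dotv (grad (g i) x) xi + alpha * g i x) = 0.
  by apply: etrans cs; apply: eq_bigr => i _; rewrite mxE.
rewrite (_ : \sum_i _ = \sum_i u 0 i * (dotv (grad (g i) x) z + alpha * g i x) -
                    \sum_i u 0 i * (dotv (grad (g i) x) xi + alpha * g i x)); last first.
  by rewrite -sumrB; apply: eq_bigr => i _; rewrite dotvZr dotvC dotvBr; ring.
rewrite cs' subr0; apply: sumr_le0 => i _; apply: mulr_ge0_le0 => //.
by have := Gz i; lra.
Qed.

Lemma qp_kkt_sqnorm_le xi uv z : qp_kkt xi uv -> qp_feasible z ->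
  sqnorm (xi + c) + sqnorm (z - xi) <= sqnorm (z + c).
Proof.
move=> Kxi Pz; have := qp_kkt_dotv_ge0 Kxi Pz.
rewrite (_ : z + c = (z - xi) + (xi + c)); last by rewrite addrA subrK.
by rewrite (sqnormD (z - xi)); lra.
Qed.

Lemma qp_kkt_minimizerE xi uv : qp_kkt xi uv ->
  forall z, qp_minimizer z <-> z = xi.
Proof.
move=> Kxi z; have [_ _ Pxi _] := Kxi; split => [[Pz min_z] | ->].
  have := qp_kkt_sqnorm_le Kxi Pz; have := min_z _ Pxi.
  move=> h1 h2; apply/eqP; rewrite -subr_eq0 -sqnorm_le0; lra.
split=> // z' Pz'; have := qp_kkt_sqnorm_le Kxi Pz'.
by have := sqnorm_ge0 (z' - xi); lra.
Qed.

Lemma qp_minimizer_exists z0 : qp_feasible z0 -> exists xi, qp_minimizer xi.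
Proof.
move=> Pz0; set S := [set z | sqnorm (z + c) <= sqnorm (z0 + c)].
have clP : closed [set z | qp_feasible z] by exact: closed_polyhedron.
have A0 : S `&` qp_feasible !=set0 by exists z0; split => //=; rewrite /S /= lexx.
have cptS : compact S by exact: compact_sqnorm_le.
have [xi] := EVT_min_rV A0 (compact_closedI cptS clP)
  (continuous_subspaceT (sqnormDr_continuous (c := c))).
rewrite inE => -[Sxi Pxi] min_xi; exists xi; split => // z Pz.
suff : sqnorm (xi + c) <= sqnorm (z + c) by lra.
have [Sz|/ltW] := leP (sqnorm (z + c)) (sqnorm (z0 + c)); last exact: le_trans Sxi.
by apply: min_xi; rewrite inE.
Qed.

Lemma Galpha_minimizer z0 : qp_feasible z0 -> qp_minimizer (Galpha f g h alpha x).
Proof. by move=> /qp_minimizer_exists[xi]; exact: xgetI. Qed.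

Lemma qp_feasible_small_steps d : feasible g h x -> 0 < alpha ->
  (forall i, g i x = 0 -> dotv (grad (g i) x) d <= 0) ->
  (forall j, dotv (grad (h j) x) d = 0) ->
  exists2 t, 0 < t & forall s, 0 <= s <= t -> qp_feasible (s *: d).
Proof.
move=> [gx hx] alpha_gt0 Gd Hd.
(* Steps below 1 / (1 + S) are dominated by the slack of every inactive
   constraint; the active ones contribute the junk value 0 to [S]. *)
pose S := \sum_i `|dotv (grad (g i) x) d| / (alpha * `|g i x|).
have S_ge0 : 0 <= S by apply: sumr_ge0 => i _; rewrite divr_ge0 // mulr_ge0 // ltW.
exists (1 / (1 + S)) => [|s /andP[s_ge0]]; first by rewrite divr_gt0 //; lra.
rewrite ler_pdivlMr; last by lra.
move=> sS; split => [i|j]; rewrite dotvZr; last by rewrite Hd hx !mulr0.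
have [gi0|gi_neq0] := eqVneq (g i x) 0.
  by rewrite gi0 mulr0; apply: mulr_ge0_le0 => //; exact: Gd.
set w := dotv (grad (g i) x) d.
have gi_lt0 : g i x < 0 by rewrite lt_neqAle gi_neq0 gx.
have slack_gt0 : 0 < alpha * `|g i x| by rewrite mulr_gt0 // normr_gt0.
have w_le : `|w| <= S * (alpha * `|g i x|).
  rewrite -ler_pdivrMr // /S (bigD1 i) //= lerDl; apply: sumr_ge0 => l _.
  by rewrite divr_ge0 // mulr_ge0 // ltW.
have := ler_wpM2l s_ge0 (ler_norm w); have := ler_wpM2l s_ge0 w_le.
have : s * S * (alpha * `|g i x|) <= alpha * `|g i x|.
  by rewrite -[leRHS]mul1r; apply: ler_wpM2r; [exact: ltW | lra].
rewrite ltr0_norm //; lra.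
Qed.

Lemma qp_minimizer0_cone_ge0 d : feasible g h x -> 0 < alpha -> qp_minimizer 0 ->
  (forall i, g i x = 0 -> dotv (grad (g i) x) d <= 0) ->
  (forall j, dotv (grad (h j) x) d = 0) -> 0 <= dotv c d.
Proof.
move=> Fx alpha_gt0 [_ min0] Gd Hd.
have [t t_gt0 Pt] := qp_feasible_small_steps Fx alpha_gt0 Gd Hd.
apply: (@small_affine_ge0 _ (sqnorm d / 2) _ t t_gt0) => s /andP[s_gt0 s_le].
have := min0 _ (Pt s _); rewrite ltW // s_le => /(_ isT).
rewrite add0r sqnormD sqnormZ dotvZl (dotvC d) -(pmulr_rge0 _ s_gt0); lra.
Qed.

Lemma qp_minimizer0_KKT : feasible g h x -> 0 < alpha -> qp_minimizer 0 -> X_KKT f g h x.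
Proof.
move=> Fx alpha_gt0 min0.
(* Generators of the dual of the linearized cone: an equality constraint
   gives two opposite generators, an inactive inequality the zero one. *)
pose gen (s : 'I_m + ('I_k + 'I_k)) : 'rV[R]_n := match s with
  | inl i => if g i x == 0 then - grad (g i) x else 0
  | inr (inl j) => grad (h j) x
  | inr (inr j) => - grad (h j) x end.
have [y y_ge0 Ey] : in_cone gen c.
  apply: farkas => d Hd; apply: qp_minimizer0_cone_ge0 => // [i gi0 | j].
    by have := Hd (inl i); rewrite /= gi0 eqxx dotvNl oppr_ge0.
  by have := Hd (inr (inl j)); have := Hd (inr (inr j)); rewrite /= dotvNl; lra.
pose u := \row_i (if g i x == 0 then y (inl i) else 0).
pose v := \row_j (y (inr (inr j)) - y (inr (inl j))).
have EG : u *m Gjac g x = - \sum_i y (inl i) *: gen (inl i).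
  rewrite mulmx_Gjac -sumrN; apply: eq_bigr => i _; rewrite mxE /=.
  by case: eqP => _; rewrite ?scalerN ?opprK ?scaler0 ?scale0r ?oppr0.
have EH : v *m Hjac h x = - (\sum_j y (inr (inl j)) *: gen (inr (inl j)) +
                             \sum_j y (inr (inr j)) *: gen (inr (inr j))).
  rewrite mulmx_Hjac -big_split -sumrN; apply: eq_bigr => j _; rewrite mxE /=.
  by rewrite scalerN scalerBl opprB.
have [gx hx] := Fx; exists (u, v); split => //= [|i|].
- by rewrite Ey big_sumType /= big_sumType /= EG EH addrAC addrK subrr.
- by rewrite mxE; case: eqP.
- by apply: big1 => i _; rewrite !mxE; case: eqP => [->|]; rewrite ?mulr0 ?mul0r.
Qed.

End ProjectionQP.

Theorem mainTheorem7 (R : realType) (n m k : nat)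
  (f : 'rV[R]_n -> R) (g : 'I_m -> 'rV[R]_n -> R) (h : 'I_k -> 'rV[R]_n -> R)
  (alpha : R) (xstar : 'rV[R]_n) :
  C1 f -> (forall i, C1 (g i)) -> (forall j, C1 (h j)) ->
  0 < alpha ->
  feasible g h xstar ->
  MFCQ g h xstar ->
  (Galpha f g h alpha xstar = 0 <-> X_KKT f g h xstar) /\
  (X_KKT f g h xstar -> Lambda f g h alpha xstar = multipliers f g h xstar).
Proof.
move=> _ _ _ alpha_gt0 Fx _.
have min_Galpha := Galpha_minimizer f (qp_feasible0 Fx (ltW alpha_gt0)).
have kkt0 uv : lagrange_mult f g h xstar uv <-> qp_kkt f g h alpha xstar 0 uv.
  exact: lagrange_mult_qp_kkt0.
split.
  split => [G0 | [uv /kkt0 K0]]; last exact/(qp_kkt_minimizerE K0).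
  by move: min_Galpha; rewrite G0; exact: qp_minimizer0_KKT.
move=> [uv0 /kkt0 K0]; apply/seteqP; split => uv /=.
  move=> /Lambda_qp_kkt[xi Kxi]; apply/kkt0.
  suff -> : 0 = xi by [].
  by apply/(qp_kkt_minimizerE Kxi)/(qp_kkt_minimizerE K0).
by move=> /kkt0 K; apply/Lambda_qp_kkt; exists 0.
Qed.
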